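(* Let $\alpha$ be a unit-speed curve in $\mathbb{R}^3$ with nonvanishing curvature, let $\alpha_T$ be its tangent indicatrix with arc length $s_T$ and Frenet apparatus $\{T_T,N_T,B_T,\kappa_T,\tau_T\}$, and let $\beta$ be a Mannheim-direction curve of $\alpha_T$ (an $X$-direction curve of $\alpha_T$ with $N_\beta=B_T$). Then $$\frac{\tau_T}{\kappa_T}=\mp\,\frac{1}{\dfrac{\kappa_\beta^2}{(\kappa_\beta^2+\tau_\beta^2)^{3/2}}\,\dfrac{d}{ds_T}\Big(\dfrac{\tau_\beta}{\kappa_\beta}\Big)}.$$ That is, $\tau_T/\kappa_T$ equals this reciprocal up to sign.
   Context: Let $\alpha:I\subset\mathbb{R}\to\mathbb{R}^3$ be a unit-speed curve with curvature $\kappa>0$, torsion $\tau$ and Frenet frame $\{T,N,B\}$. The tangent indicatrix of $\alpha$ is the curve $\alpha_T=T$ on the unit sphere. Its arc length is $s_T=\int\kappa\,ds$. Its Frenet apparatus is $\{T_T,N_T,B_T,\kappa_T,\tau_T\}$, with $\frac{dT_T}{ds_T}=\kappa_TN_T$, $\frac{dN_T}{ds_T}=-\kappa_TT_T+\tau_TB_T$ and $\frac{dB_T}{ds_T}=-\tau_TN_T$. Let $x,y,z$ be real functions of $s_T$ with $x^2+y^2+z^2=1$, and set $X=xT_T+yN_T+zB_T$. An integral curve $\beta$ of $X$, meaning $d\beta/ds_T=X$, is an $X$-direction curve of $\alpha_T$. It has unit speed with arc length $s_T$. It is regarded as a Frenet curve with frame $\{T_\beta=X,N_\beta,B_\beta\}$,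 curvature $\kappa_\beta>0$ and torsion $\tau_\beta$. $\beta$ is a Mannheim-direction curve of $\alpha_T$ if $N_\beta=B_T$. *)

From Stdlib Require Import Reals.
From Coquelicot Require Import Coquelicot.
Open Scope R_scope.

(* Euclidean 3-space as triples (a NormedModule in Coquelicot via products). *)
Definition R3 : Type := (R * R * R)%type.

Definition vec (a b c : R) : R3 := (a, b, c).
Definition vx (u : R3) : R := fst (fst u).
Definition vy (u : R3) : R := snd (fst u).
Definition vz (u : R3) : R := snd u.

Definition vadd (u v : R3) : R3 := vec (vx u + vx v) (vy u + vy v) (vz u + vz v).
Definition vscale (k : R) (u : R3) : R3 := vec (k * vx u) (k * vy u) (k * vz u).
Definition dot (u v : R3) : R := vx u * vx v + vy u * vy v + vz u * vz v.
Definition norm3 (u : R3) : R := sqrt (dot u u).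
Definition cross (u v : R3) : R3 :=
  vec (vy u * vz v - vz u * vy v)
      (vz u * vx v - vx u * vz v)
      (vx u * vy v - vy u * vx v).

Definition in_oint (a b : Rbar) (t : R) : Prop := Rbar_lt a t /\ Rbar_lt t b.

Definition frenet_apparatus (a b : Rbar) (c T N B : R -> R3) (k tau : R -> R)
  : Prop :=
  forall t, in_oint a b t ->
    is_derive c t (T t) /\
    is_derive T t (vscale (k t) (N t)) /\
    is_derive N t (vadd (vscale (- k t) (T t)) (vscale (tau t) (B t))) /\
    is_derive B t (vscale (- tau t) (N t)) /\
    dot (T t) (T t) = 1 /\ dot (N t) (N t) = 1 /\ dot (T t) (N t) = 0 /\
    B t = cross (T t) (N t) /\
    0 < k t.

(* Since N_beta = B_T, the tangent of beta lies in the osculating plane of alpha_T: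
   X = x T_T + y N_T with x^2 + y^2 = 1.  Differentiating X.B_T = 0 and B_beta.B_T = 0
   with the Frenet equations gives kappa_beta = y tau_T and tau_beta = x tau_T, while
   x' = kappa_T y and y' = -kappa_T x.  Hence (tau_beta/kappa_beta)' = (x/y)' =
   kappa_T / y^2 and kappa_beta^2 + tau_beta^2 = tau_T^2, so the right-hand side
   equals |tau_T| / kappa_T. *)
From Stdlib Require Import Reals Lra.
From Coquelicot Require Import Coquelicot.
Open Scope R_scope.

Ltac r3_ring :=
  repeat match goal with u : R3 |- _ => destruct u as [[? ?] ?] end;
  unfold dot, cross, vadd, vscale, vec, vx, vy, vz; simpl; ring.

Lemma dot_comm u v : dot u v = dot v u. Proof. r3_ring. Qed.
Lemma dot_scale_l k u v : dot (vscale k u) v = k * dot u v. Proof. r3_ring. Qed.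
Lemma dot_scale_r k u v : dot u (vscale k v) = k * dot u v. Proof. r3_ring. Qed.
Lemma dot_add_l u w v : dot (vadd u w) v = dot u v + dot w v. Proof. r3_ring. Qed.
Lemma dot_add_r u w v : dot v (vadd u w) = dot v u + dot v w. Proof. r3_ring. Qed.
Lemma dot_cross_l u v : dot u (cross u v) = 0. Proof. r3_ring. Qed.
Lemma dot_cross_r u v : dot v (cross u v) = 0. Proof. r3_ring. Qed.

Lemma dot_cross_cross u v :
  dot (cross u v) (cross u v) = dot u u * dot v v - dot u v ^ 2.
Proof. r3_ring. Qed.

Lemma dot_cross_cross_r w u v :
  dot (cross w (cross u v)) v = dot u v * dot w v - dot v v * dot w u.
Proof. r3_ring. Qed.

Lemma cross_orthonormal u v :
  dot u u = 1 -> dot v v = 1 -> dot u v = 0 ->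
  dot (cross u v) (cross u v) = 1.
Proof. intros Hu Hv Huv. rewrite dot_cross_cross, Hu, Hv, Huv. ring. Qed.

Lemma is_derive_fst (U V : NormedModule R_AbsRing) (c : R -> U * V) t v :
  is_derive c t v -> is_derive (fun u => fst (c u)) t (fst v).
Proof.
  intros H.
  apply (filterdiff_comp' c fst t _ fst H), filterdiff_linear, is_linear_fst.
Qed.

Lemma is_derive_snd (U V : NormedModule R_AbsRing) (c : R -> U * V) t v :
  is_derive c t v -> is_derive (fun u => snd (c u)) t (snd v).
Proof.
  intros H.
  apply (filterdiff_comp' c snd t _ snd H), filterdiff_linear, is_linear_snd.
Qed.

Lemma is_derive_dot (c d : R -> R3) t v w :
  is_derive c t v -> is_derive d t w ->
  is_derive (fun u => dot (c u) (d u)) t (dot v (d t) + dot (c t) w).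
Proof.
  intros Hc Hd.
  pose proof (is_derive_fst _ _ _ _ _ (is_derive_fst _ _ _ _ _ Hc)) as Hc1.
  pose proof (is_derive_snd _ _ _ _ _ (is_derive_fst _ _ _ _ _ Hc)) as Hc2.
  pose proof (is_derive_snd _ _ _ _ _ Hc) as Hc3.
  pose proof (is_derive_fst _ _ _ _ _ (is_derive_fst _ _ _ _ _ Hd)) as Hd1.
  pose proof (is_derive_snd _ _ _ _ _ (is_derive_fst _ _ _ _ _ Hd)) as Hd2.
  pose proof (is_derive_snd _ _ _ _ _ Hd) as Hd3.
  pose proof (is_derive_plus _ _ _ _ _
    (is_derive_plus _ _ _ _ _ (Derive.is_derive_mult _ _ _ _ _ Hc1 Hd1)
                              (Derive.is_derive_mult _ _ _ _ _ Hc2 Hd2))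
    (Derive.is_derive_mult _ _ _ _ _ Hc3 Hd3)) as H.
  match type of H with is_derive _ _ ?l =>
    replace (dot v (d t) + dot (c t) w) with l by (unfold plus, dot, vx, vy, vz; simpl; ring)
  end.
  exact H.
Qed.

Lemma is_derive_locally_zero (f : R -> R) t l :
  locally t (fun u => f u = 0) -> is_derive f t l -> l = 0.
Proof.
  intros Hf Hd.
  rewrite <- (is_derive_unique (fun _ => 0) t l (is_derive_ext_loc f _ t l Hf Hd)).
  apply Derive_const.
Qed.

Lemma locally_in_oint a b t : in_oint a b t -> locally t (in_oint a b).
Proof. exact (open_and _ _ (open_Rbar_gt a) (open_Rbar_lt b) t). Qed.

Lemma Rpower_sqr_three_halves r :
  r <> 0 -> Rpower (r ^ 2) (3 / 2) = Rabs r * r ^ 2.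
Proof.
  intros Hr.
  assert (Hr2 : 0 < r ^ 2) by (apply pow2_gt_0; exact Hr).
  replace (3 / 2) with (1 + / 2) by field.
  rewrite Rpower_plus, Rpower_1, Rpower_sqrt by exact Hr2.
  rewrite <- sqrt_Rsqr_abs, Rsqr_pow2. ring.
Qed.

Definition frame_field (x y z : R -> R) (T N B : R -> R3) (t : R) : R3 :=
  vadd (vadd (vscale (x t) (T t)) (vscale (y t) (N t))) (vscale (z t) (B t)).

Section MannheimDirection.

Variables (a b : Rbar) (c T N B : R -> R3) (k tau : R -> R).
Hypothesis Hc : frenet_apparatus a b c T N B k tau.

Variables (x y z : R -> R) (beta Nb Bb : R -> R3) (kb taub : R -> R).
Let X := frame_field x y z T N B.
Hypothesis Hxyz : forall t, in_oint a b t -> x t ^ 2 + y t ^ 2 + z t ^ 2 = 1.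
Hypothesis Hbeta : frenet_apparatus a b beta X Nb Bb kb taub.
Hypothesis Hmannheim : forall t, in_oint a b t -> Nb t = B t.

Lemma frenet_frame_dots t : in_oint a b t ->
  dot (T t) (B t) = 0 /\ dot (N t) (B t) = 0 /\ dot (B t) (B t) = 1.
Proof.
  intros Ht. destruct (Hc t Ht) as (_ & _ & _ & _ & HTT & HNN & HTN & HB & _).
  rewrite HB. split; [|split].
  - apply dot_cross_l.
  - apply dot_cross_r.
  - apply cross_orthonormal; assumption.
Qed.

Lemma frame_field_coords t : in_oint a b t ->
  dot (X t) (T t) = x t /\ dot (X t) (N t) = y t /\ dot (X t) (B t) = z t.
Proof.
  intros Ht. destruct (Hc t Ht) as (_ & _ & _ & _ & HTT & HNN & HTN & _).
  destruct (frenet_frame_dots t Ht) as (HTB & HNB & HBB).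
  unfold X, frame_field.
  rewrite !dot_add_l, !dot_scale_l, (dot_comm (N t) (T t)),
    (dot_comm (B t) (T t)), (dot_comm (B t) (N t)), HTT, HNN, HTN, HTB, HNB, HBB.
  repeat split; ring.
Qed.

Lemma mannheim_z_eq0 t : in_oint a b t -> z t = 0.
Proof.
  intros Ht. destruct (Hbeta t Ht) as (_ & _ & _ & _ & _ & _ & HXN & _).
  rewrite Hmannheim in HXN by exact Ht.
  destruct (frame_field_coords t Ht) as (_ & _ & <-). exact HXN.
Qed.

Lemma mannheim_unit t : in_oint a b t -> x t ^ 2 + y t ^ 2 = 1.
Proof.
  intros Ht. pose proof (Hxyz t Ht) as H. rewrite mannheim_z_eq0 in H by exact Ht.
  lra.
Qed.

Lemma mannheim_binormal_dots t : in_oint a b t ->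
  dot (Bb t) (N t) = - x t /\ dot (Bb t) (B t) = 0.
Proof.
  intros Ht. destruct (Hbeta t Ht) as (_ & _ & _ & _ & _ & _ & _ & HBb & _).
  destruct (Hc t Ht) as (_ & _ & _ & _ & _ & HNN & HTN & HB & _).
  destruct (frame_field_coords t Ht) as (HXT & _).
  rewrite Hmannheim in HBb by exact Ht. rewrite HBb. split.
  - rewrite HB, dot_cross_cross_r, HTN, HNN, HXT. ring.
  - rewrite dot_comm. apply dot_cross_r.
Qed.

(* [X . B = 0] near [t], and its derivative is [kb - y tau]. *)
Lemma mannheim_curvature t : in_oint a b t -> kb t = y t * tau t.
Proof.
  intros Ht.
  destruct (Hc t Ht) as (_ & _ & _ & HdB & _).
  destruct (Hbeta t Ht) as (_ & HdX & _).
  rewrite Hmannheim in HdX by exact Ht.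
  pose proof (is_derive_dot _ _ t _ _ HdX HdB) as D.
  apply is_derive_locally_zero in D.
  - destruct (frenet_frame_dots t Ht) as (_ & _ & HBB).
    destruct (frame_field_coords t Ht) as (_ & HXN & _).
    rewrite dot_scale_l, dot_scale_r, HBB, HXN in D. lra.
  - apply (filter_imp (in_oint a b)); [|exact (locally_in_oint a b t Ht)].
    intros u Hu. destruct (frame_field_coords u Hu) as (_ & _ & ->).
    exact (mannheim_z_eq0 u Hu).
Qed.

Lemma mannheim_torsion t : in_oint a b t -> taub t = x t * tau t.
Proof.
  intros Ht.
  destruct (Hc t Ht) as (_ & _ & _ & HdB & _).
  destruct (Hbeta t Ht) as (_ & _ & _ & HdBb & _).
  rewrite Hmannheim in HdBb by exact Ht.
  pose proof (is_derive_dot _ _ t _ _ HdBb HdB) as D.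
  apply is_derive_locally_zero in D.
  - destruct (frenet_frame_dots t Ht) as (_ & _ & HBB).
    destruct (mannheim_binormal_dots t Ht) as (HBbN & _).
    rewrite dot_scale_l, dot_scale_r, HBB, HBbN in D. lra.
  - apply (filter_imp (in_oint a b)); [|exact (locally_in_oint a b t Ht)].
    intros u Hu. exact (proj2 (mannheim_binormal_dots u Hu)).
Qed.

Lemma mannheim_y_tau_neq0 t : in_oint a b t -> y t <> 0 /\ tau t <> 0.
Proof.
  intros Ht. destruct (Hbeta t Ht) as (_ & _ & _ & _ & _ & _ & _ & _ & Hkb).
  rewrite mannheim_curvature in Hkb by exact Ht.
  split; intros H0; rewrite H0 in Hkb; lra.
Qed.

Lemma is_derive_mannheim_x t : in_oint a b t -> is_derive x t (k t * y t).
Proof.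
  intros Ht.
  destruct (Hc t Ht) as (_ & HdT & _).
  destruct (Hbeta t Ht) as (_ & HdX & _).
  rewrite Hmannheim in HdX by exact Ht.
  apply (is_derive_ext_loc (fun u => dot (X u) (T u))).
  - apply (filter_imp (in_oint a b)); [|exact (locally_in_oint a b t Ht)].
    intros u Hu. exact (proj1 (frame_field_coords u Hu)).
  - replace (k t * y t) with (dot (vscale (kb t) (B t)) (T t)
                              + dot (X t) (vscale (k t) (N t))).
    + exact (is_derive_dot _ _ t _ _ HdX HdT).
    + rewrite dot_scale_l, dot_scale_r, dot_comm.
      destruct (frenet_frame_dots t Ht) as (-> & _).
      destruct (frame_field_coords t Ht) as (_ & -> & _). ring.
Qed.

Lemma is_derive_mannheim_y t : in_oint a b t -> is_derive y t (- k t * x t).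
Proof.
  intros Ht.
  destruct (Hc t Ht) as (_ & _ & HdN & _).
  destruct (Hbeta t Ht) as (_ & HdX & _).
  rewrite Hmannheim in HdX by exact Ht.
  apply (is_derive_ext_loc (fun u => dot (X u) (N u))).
  - apply (filter_imp (in_oint a b)); [|exact (locally_in_oint a b t Ht)].
    intros u Hu. exact (proj1 (proj2 (frame_field_coords u Hu))).
  - replace (- k t * x t) with
      (dot (vscale (kb t) (B t)) (N t)
       + dot (X t) (vadd (vscale (- k t) (T t)) (vscale (tau t) (B t)))).
    + exact (is_derive_dot _ _ t _ _ HdX HdN).
    + rewrite dot_scale_l, dot_add_r, !dot_scale_r, (dot_comm (B t)).
      destruct (frenet_frame_dots t Ht) as (_ & -> & _).
      destruct (frame_field_coords t Ht) as (-> & _ & ->).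
      rewrite mannheim_z_eq0 by exact Ht. ring.
Qed.

Lemma is_derive_mannheim_ratio t : in_oint a b t ->
  is_derive (fun u => taub u / kb u) t (k t / y t ^ 2).
Proof.
  intros Ht. destruct (mannheim_y_tau_neq0 t Ht) as [Hy _].
  assert (Hnum : k t * y t * y t - x t * (- k t * x t) = k t).
  { transitivity (k t * (x t ^ 2 + y t ^ 2)); [ring|].
    rewrite mannheim_unit by exact Ht. ring. }
  apply (is_derive_ext_loc (fun u => x u / y u)).
  - apply (filter_imp (in_oint a b)); [|exact (locally_in_oint a b t Ht)].
    intros u Hu. destruct (mannheim_y_tau_neq0 u Hu) as [Hyu Htu].
    change (x u / y u = taub u / kb u).
    rewrite mannheim_curvature, mannheim_torsion by exact Hu. field. tauto.
  - rewrite <- Hnum.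
    apply is_derive_div; auto using is_derive_mannheim_x, is_derive_mannheim_y.
Qed.

Lemma mannheim_curvature_torsion_sqr t : in_oint a b t ->
  kb t ^ 2 + taub t ^ 2 = tau t ^ 2.
Proof.
  intros Ht. rewrite mannheim_curvature, mannheim_torsion by exact Ht.
  transitivity (tau t ^ 2 * (x t ^ 2 + y t ^ 2)); [ring|].
  rewrite mannheim_unit by exact Ht. ring.
Qed.

Lemma mannheim_tau_over_k t : in_oint a b t ->
  let rhs := / (kb t ^ 2 / Rpower (kb t ^ 2 + taub t ^ 2) (3 / 2)
                * Derive (fun u => taub u / kb u) t) in
  tau t / k t = rhs \/ tau t / k t = - rhs.
Proof.
  intros Ht rhs. unfold rhs.
  destruct (mannheim_y_tau_neq0 t Ht) as [Hy Htau].
  destruct (Hc t Ht) as (_ & _ & _ & _ & _ & _ & _ & _ & Hk).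
  replace (Derive (fun u => taub u / kb u) t) with (k t / y t ^ 2)
    by (symmetry; exact (is_derive_unique _ _ _ (is_derive_mannheim_ratio t Ht))).
  rewrite mannheim_curvature_torsion_sqr, Rpower_sqr_three_halves, mannheim_curvature by assumption.
  destruct (Rle_lt_dec 0 (tau t)) as [Hpos | Hneg].
  - left. rewrite Rabs_pos_eq by exact Hpos. field. lra.
  - right. rewrite Rabs_left by exact Hneg. field. lra.
Qed.

End MannheimDirection.

Theorem corollary6p4
  (* alpha : I -> R^3, I = ]a0,b0[, unit speed, tangent T = alpha',
     T' = dT, curvature kappa = |T'| > 0 *)
  (a0 b0 : Rbar) (alpha T dT : R -> R3)
  (Halpha : forall s, in_oint a0 b0 s ->
     is_derive alpha s (T s) /\ norm3 (T s) = 1 /\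
     is_derive T s (dT s) /\ 0 < norm3 (dT s))
  (* arc length s_T = \int kappa ds of the tangent indicatrix, a bijection
     from I onto J = ]a1,b1[ with inverse phi *)
  (a1 b1 : Rbar) (sT phi : R -> R)
  (HsT : forall s, in_oint a0 b0 s ->
     is_derive sT s (norm3 (dT s)) /\ in_oint a1 b1 (sT s) /\ phi (sT s) = s)
  (Hphi : forall t, in_oint a1 b1 t -> in_oint a0 b0 (phi t) /\ sT (phi t) = t)
  (* Frenet apparatus of the tangent indicatrix alpha_T = T, parametrized
     by its arc length s_T *)
  (TT NT BT : R -> R3) (kT tauT : R -> R)
  (HT : frenet_apparatus a1 b1 (fun t => T (phi t)) TT NT BT kT tauT)
  (* X-direction curve beta of alpha_T *)
  (x y z : R -> R) (beta : R -> R3)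
  (Hxyz : forall t, in_oint a1 b1 t -> x t ^ 2 + y t ^ 2 + z t ^ 2 = 1)
  (Nb Bb : R -> R3) (kb taub : R -> R)
  (Hbeta : frenet_apparatus a1 b1 beta
     (fun t => vadd (vadd (vscale (x t) (TT t)) (vscale (y t) (NT t)))
                    (vscale (z t) (BT t)))
     Nb Bb kb taub)
  (* Mannheim-direction condition N_beta = B_T *)
  (HMann : forall t, in_oint a1 b1 t -> Nb t = BT t) :
  forall t, in_oint a1 b1 t ->
    let rhs := / (kb t ^ 2 / Rpower (kb t ^ 2 + taub t ^ 2) (3 / 2)
                  * Derive (fun u => taub u / kb u) t) in
    tauT t / kT t = rhs \/ tauT t / kT t = - rhs.
Proof.
  exact (mannheim_tau_over_k a1 b1 _ TT NT BT kT tauT HT x y z beta Nb Bb kb taub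
           Hxyz Hbeta HMann).
Qed.
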